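(* For every positive integer $n$ there exist a line $\ell$ in $\mathbb{R}^3$ and a finite family of convex polytopes in $\mathbb{R}^3$ of size at least $n$ that is a minimal pinning of $\ell$.
   Context: A line $\ell$ is a transversal to a family $\mathcal{F}$ of convex polytopes if it intersects every member of $\mathcal{F}$. $\mathcal{F}$ pins $\ell$ if $\ell$ is a transversal to $\mathcal{F}$ and $\ell$ is an isolated point of the space of line transversals to $\mathcal{F}$ (in the space of lines with its usual topology). $\mathcal{F}$ is a minimal pinning of $\ell$ if it pins $\ell$ and no proper subfamily of $\mathcal{F}$ pins $\ell$. (The polytopes are allowed to intersect each other and to have facets coplanar with $\ell$.) *)

From Stdlib Require Import Reals List.
Import ListNotations.
Open Scope R_scope.

Definition point : Type := (R * R * R)%type.

Definition padd (x y : point) : point :=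
  let '(x1, x2, x3) := x in let '(y1, y2, y3) := y in (x1 + y1, x2 + y2, x3 + y3).
Definition pscale (t : R) (x : point) : point :=
  let '(x1, x2, x3) := x in (t * x1, t * x2, t * x3).
Definition pzero : point := (0, 0, 0).

(* sup-norm distance between points (induces the usual topology of R^3) *)
Definition pclose (eps : R) (x y : point) : Prop :=
  let '(x1, x2, x3) := x in let '(y1, y2, y3) := y in
  Rabs (x1 - y1) < eps /\ Rabs (x2 - y2) < eps /\ Rabs (x3 - y3) < eps.

Definition conv_comb (ws : list R) (vs : list point) : point :=
  fold_right (fun wv acc => padd (pscale (fst wv) (snd wv)) acc) pzero (combine ws vs).

Definition conv_hull (vs : list point) (x : point) : Prop :=
  exists ws : list R,
    length ws = length vs /\ Forall (fun w => 0 <= w) ws /\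
    fold_right Rplus 0 ws = 1 /\ x = conv_comb ws vs.

Definition convex_polytope (P : point -> Prop) : Prop :=
  exists vs : list point, vs <> [] /\ forall x, P x <-> conv_hull vs x.

Definition line_pts (p d : point) (x : point) : Prop :=
  exists t : R, x = padd p (pscale t d).

(* A line is represented by a pair (p, d) with d <> 0; two representatives
   denote the same line iff they have the same point set. *)
Definition is_line (p d : point) : Prop := d <> pzero.

Definition same_line (p d p' d' : point) : Prop :=
  forall x, line_pts p d x <-> line_pts p' d' x.

Definition transversal (S : nat -> Prop) (P : nat -> point -> Prop) (p d : point) : Prop :=
  forall i, S i -> exists x, line_pts p d x /\ P i x.

(* The space of lines carries the
   quotient topology of {(p,d) | d <> 0} (an open quotient map), so isolation
   means: some neighbourhood of the representative (p,d) contains only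
   representatives of transversal lines equal to the given line. *)
Definition pins (S : nat -> Prop) (P : nat -> point -> Prop) (p d : point) : Prop :=
  transversal S P p d /\
  exists eps : R, 0 < eps /\
    forall p' d', is_line p' d' -> pclose eps p p' -> pclose eps d d' ->
      transversal S P p' d' -> same_line p d p' d'.

Definition minimal_pinning (m : nat) (P : nat -> point -> Prop) (p d : point) : Prop :=
  pins (fun i => (i < m)%nat) P p d /\
  forall S : nat -> Prop,
    (forall i, S i -> (i < m)%nat) -> (exists i, (i < m)%nat /\ ~ S i) ->
    ~ pins S P p d.

(* The pinned line is the x-axis.  The segments {0}x{0}x[-1,1] and {1}x[-1,1]x{0}
   force every nearby transversal to be a line x |-> (x, c x, e (x - 1)).  The other
   polytopes are thin wedges with apex (1/2, 0, 0) on the axis, and such a line meets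
   the wedge with slab a <= x <= b and normal (0, n_y, n_z) iff
   n_y c t + n_z e (t - 1) >= 0 for some t in [a, b].  The wedges impose c >= 0,
   e >= 2c, e <= 2^n c and, for each k < n, e outside (2^k c, 2^(k+2) c); these dyadic
   windows cover [2c, 2^n c], so c = e = 0 and the axis is pinned.  Without one wedge
   some nonzero slope pair (c, e), scaled down, satisfies all remaining conditions;
   without one segment the axis can rotate about the apex. *)

From Stdlib Require Import Reals List Lra Lia Psatz.
Import ListNotations.
Open Scope R_scope.

Lemma pair3_eq (a b c a' b' c' : R) : a = a' -> b = b' -> c = c' -> (a, b, c) = (a', b', c').
Proof. now intros -> -> ->. Qed.

Definition lin (k1 k2 k3 : R) (x : point) : R :=
  let '(x1, x2, x3) := x in k1 * x1 + k2 * x2 + k3 * x3.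

Lemma lin_opp k1 k2 k3 x : lin (- k1) (- k2) (- k3) x = - lin k1 k2 k3 x.
Proof. destruct x as [[x1 x2] x3]; simpl; ring. Qed.

Lemma lin_padd_pscale k1 k2 k3 w v x :
  lin k1 k2 k3 (padd (pscale w v) x) = w * lin k1 k2 k3 v + lin k1 k2 k3 x.
Proof. destruct v as [[v1 v2] v3], x as [[x1 x2] x3]; simpl; ring. Qed.

Lemma conv_comb_cons w ws v vs :
  conv_comb (w :: ws) (v :: vs) = padd (pscale w v) (conv_comb ws vs).
Proof. reflexivity. Qed.

Lemma lin_conv_comb_ge k1 k2 k3 c vs ws :
  length ws = length vs -> Forall (fun w => 0 <= w) ws ->
  Forall (fun v => c <= lin k1 k2 k3 v) vs ->
  c * fold_right Rplus 0 ws <= lin k1 k2 k3 (conv_comb ws vs).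
Proof.
  revert ws; induction vs as [|v vs IH]; intros [|w ws] Hlen Hws Hvs; try discriminate.
  - simpl; lra.
  - injection Hlen as Hlen.
    inversion_clear Hws as [| ? ? Hw Hws']; inversion_clear Hvs as [| ? ? Hv Hvs'].
    rewrite conv_comb_cons, lin_padd_pscale; simpl.
    pose proof (Rmult_le_compat_l w _ _ Hw Hv).
    pose proof (IH ws Hlen Hws' Hvs').
    lra.
Qed.

Lemma conv_hull_lin_ge k1 k2 k3 c vs x :
  conv_hull vs x -> Forall (fun v => c <= lin k1 k2 k3 v) vs -> c <= lin k1 k2 k3 x.
Proof.
  intros (ws & Hlen & Hws & Hsum & ->) Hvs.
  pose proof (lin_conv_comb_ge k1 k2 k3 c vs ws Hlen Hws Hvs) as H.
  rewrite Hsum in H; lra.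
Qed.

Lemma conv_hull_lin_eq k1 k2 k3 c vs x :
  conv_hull vs x -> Forall (fun v => lin k1 k2 k3 v = c) vs -> lin k1 k2 k3 x = c.
Proof.
  intros Hx Hvs.
  assert (c <= lin k1 k2 k3 x).
  { apply (conv_hull_lin_ge _ _ _ _ vs); auto.
    refine (Forall_impl _ _ Hvs); intros v Hv; lra. }
  assert (- c <= lin (- k1) (- k2) (- k3) x).
  { apply (conv_hull_lin_ge _ _ _ _ vs); auto.
    refine (Forall_impl _ _ Hvs); intros v Hv; rewrite lin_opp; lra. }
  rewrite lin_opp in *; lra.
Qed.

Ltac check_vertices := repeat (apply Forall_cons; [simpl; nra |]); apply Forall_nil.
Ltac check_weights := repeat (apply Forall_cons; [lra |]); apply Forall_nil.

Definition seg0 : list point := [(0, 0, -1); (0, 0, 1)].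
Definition seg1 : list point := [(1, -1, 0); (1, 1, 0)].

Lemma seg0_inv x1 x2 x3 : conv_hull seg0 (x1, x2, x3) -> x1 = 0 /\ x2 = 0.
Proof.
  intros H.
  pose proof (conv_hull_lin_eq 1 0 0 0 _ _ H ltac:(check_vertices)).
  pose proof (conv_hull_lin_eq 0 1 0 0 _ _ H ltac:(check_vertices)).
  simpl in *; lra.
Qed.

Lemma seg1_inv x1 x2 x3 : conv_hull seg1 (x1, x2, x3) -> x1 = 1 /\ x3 = 0.
Proof.
  intros H.
  pose proof (conv_hull_lin_eq 1 0 0 1 _ _ H ltac:(check_vertices)).
  pose proof (conv_hull_lin_eq 0 0 1 0 _ _ H ltac:(check_vertices)).
  simpl in *; lra.
Qed.

Lemma seg0_mem z : -1 <= z <= 1 -> conv_hull seg0 (0, 0, z).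
Proof.
  intros Hz; exists [(1 - z) / 2; (1 + z) / 2].
  split; [reflexivity | split; [check_weights | split]].
  - simpl; field.
  - unfold conv_comb; simpl; apply pair3_eq; field.
Qed.

Lemma seg1_mem y : -1 <= y <= 1 -> conv_hull seg1 (1, y, 0).
Proof.
  intros Hy; exists [(1 - y) / 2; (1 + y) / 2].
  split; [reflexivity | split; [check_weights | split]].
  - simpl; field.
  - unfold conv_comb; simpl; apply pair3_eq; field.
Qed.

Definition wedge (a b n1 n2 : R) : list point :=
  [(1/2, 0, 0); (a, -n2, n1); (a, n2, -n1); (a, n1, n2); (b, -n2, n1); (b, n2, -n1); (b, n1, n2)].

Lemma wedge_inv a b n1 n2 x1 x2 x3 : a <= 1/2 <= b ->
  conv_hull (wedge a b n1 n2) (x1, x2, x3) -> a <= x1 <= b /\ 0 <= n1 * x2 + n2 * x3.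
Proof.
  intros Hab H.
  pose proof (conv_hull_lin_ge 1 0 0 a _ _ H ltac:(check_vertices)).
  pose proof (conv_hull_lin_ge (-1) 0 0 (-b) _ _ H ltac:(check_vertices)).
  pose proof (conv_hull_lin_ge 0 n1 n2 0 _ _ H ltac:(check_vertices)).
  simpl in *; lra.
Qed.

Lemma wedge_apex a b n1 n2 : conv_hull (wedge a b n1 n2) (1/2, 0, 0).
Proof.
  exists [1; 0; 0; 0; 0; 0; 0].
  split; [reflexivity | split; [check_weights | split]].
  - simpl; ring.
  - unfold conv_comb; simpl; apply pair3_eq; ring.
Qed.

Lemma mul_le_quarter_sqr n w : - (n * n) <= n <= n * n -> -1/4 <= w <= 1/4 ->
  - (n * n) / 4 <= n * w <= n * n / 4.
Proof. intros Hn Hw; destruct (Rle_dec 0 n); split; nra. Qed.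

(* The hypotheses on [n1], [n2] say that each is [0] or of absolute value [>= 1]; then the
   cross-section triangle [n, n^perp, - n^perp] at [x = t] contains every [w] of the box
   [[-1/4, 1/4]^2] with [n . w >= 0]. *)
Lemma wedge_mem a b n1 n2 t w1 w2 : t = a \/ t = b ->
  0 < n1 * n1 + n2 * n2 -> - (n1 * n1) <= n1 <= n1 * n1 -> - (n2 * n2) <= n2 <= n2 * n2 ->
  -1/4 <= w1 <= 1/4 -> -1/4 <= w2 <= 1/4 -> 0 <= n1 * w1 + n2 * w2 ->
  conv_hull (wedge a b n1 n2) (t, w1, w2).
Proof.
  intros Ht HN Hn1 Hn2 Hw1 Hw2 Hnw.
  pose proof (mul_le_quarter_sqr n1 w1 Hn1 Hw1); pose proof (mul_le_quarter_sqr n1 w2 Hn1 Hw2).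
  pose proof (mul_le_quarter_sqr n2 w1 Hn2 Hw1); pose proof (mul_le_quarter_sqr n2 w2 Hn2 Hw2).
  assert (Hv : n2 * w1 - n1 * w2 <= (n1 * n1 + n2 * n2) - (n1 * w1 + n2 * w2) /\
               n1 * w2 - n2 * w1 <= (n1 * n1 + n2 * n2) - (n1 * w1 + n2 * w2)) by lra.
  set (N := n1 * n1 + n2 * n2) in *.
  set (u := n1 * w1 + n2 * w2) in *; set (v := - n2 * w1 + n1 * w2).
  set (l1 := (N - u + v) / (2 * N)); set (l2 := (N - u - v) / (2 * N)); set (l3 := u / N).
  assert (0 <= l1) by (apply Rmult_le_pos; [unfold v; lra | apply Rlt_le, Rinv_0_lt_compat; lra]).
  assert (0 <= l2) by (apply Rmult_le_pos; [unfold v; lra | apply Rlt_le, Rinv_0_lt_compat; lra]).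
  assert (0 <= l3) by (apply Rmult_le_pos; [lra | apply Rlt_le, Rinv_0_lt_compat; lra]).
  destruct Ht as [-> | ->];
    [exists [0; l1; l2; l3; 0; 0; 0] | exists [0; 0; 0; 0; l1; l2; l3]];
    (split; [reflexivity | split; [check_weights | split]]);
    unfold conv_comb, l1, l2, l3, u, v, N; simpl; try apply pair3_eq; field; apply Rgt_not_eq, HN.
Qed.

(* Wedges [0], [1], [2] and [3 + k] impose [e <= 2^n c], [c >= 0], [e >= 2 c] and
   [e] outside [(2^k c, 2^(k+2) c)] on the slopes of [x |-> (x, c x, e (x - 1))]. *)
Definition wedge_lo (j : nat) : R :=
  match j with 0%nat => 0 | 1%nat | 2%nat => 1/2 | _ => -1 end.
Definition wedge_hi (j : nat) : R :=
  match j with 0%nat | 1%nat | 2%nat => 1/2 | _ => 2 end.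
Definition wedge_ny (n j : nat) : R :=
  match j with 0%nat => 2 ^ n | 1%nat => 1 | 2%nat => -2 | S (S (S k)) => - 2 ^ S k end.
Definition wedge_nz (j : nat) : R :=
  match j with 1%nat => 0 | 2%nat => -1 | _ => 1 end.

Definition wedge_of (n j : nat) : list point :=
  wedge (wedge_lo j) (wedge_hi j) (wedge_ny n j) (wedge_nz j).

Definition wedge_val (n j : nat) (c e t : R) : R :=
  wedge_ny n j * (c * t) + wedge_nz j * (e * (t - 1)).

Definition end_admissible (n j : nat) (c e : R) : Prop :=
  0 <= wedge_val n j c e (wedge_lo j) \/ 0 <= wedge_val n j c e (wedge_hi j).

Lemma pow2_ge1 k : 1 <= 2 ^ k.
Proof. apply pow_R1_Rle; lra. Qed.

Lemma wedge_params n j :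
  -1 <= wedge_lo j <= 1/2 /\ 1/2 <= wedge_hi j <= 2 /\
  0 < wedge_ny n j * wedge_ny n j + wedge_nz j * wedge_nz j /\
  - (wedge_ny n j * wedge_ny n j) <= wedge_ny n j <= wedge_ny n j * wedge_ny n j /\
  - (wedge_nz j * wedge_nz j) <= wedge_nz j <= wedge_nz j * wedge_nz j.
Proof.
  destruct j as [|[|[|k]]]; cbn [wedge_lo wedge_hi wedge_ny wedge_nz].
  - pose proof (pow2_ge1 n); repeat split; nra.
  - repeat split; lra.
  - repeat split; lra.
  - pose proof (pow2_ge1 (S k)); repeat split; nra.
Qed.

Lemma dyadic_window N c e : 0 < c -> 2 * c <= e <= 2 ^ S N * c ->
  exists k, (k <= N)%nat /\ 2 ^ k * c < e < 2 ^ S (S k) * c.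
Proof.
  induction N as [|N IH]; intros Hc He.
  - exists 0%nat; simpl in *; split; [lia | nra].
  - destruct (Rle_dec e (2 ^ S N * c)) as [Hle | Hgt].
    + destruct (IH Hc (conj (proj1 He) Hle)) as (k & Hk & Hke).
      exists k; split; [lia | exact Hke].
    + exists (S N); split; [lia |].
      assert (0 < 2 ^ S (S N)) by (apply pow_lt; lra).
      simpl in *; nra.
Qed.

(* [wedge_val] is affine in [t], negative at both ends of [[-1, 2]]. *)
Lemma window_excluded n k c e t : 2 ^ k * c < e < 2 ^ S (S k) * c -> -1 <= t <= 2 ->
  wedge_val n (3 + k) c e t < 0.
Proof.
  intros He Ht; unfold wedge_val; cbn [wedge_ny wedge_nz Nat.add]; simpl in *.
  assert (0 <= (2 - t) * (e - 2 ^ k * c)) by nra.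
  assert (0 <= (t + 1) * (2 * (2 * 2 ^ k) * c - e)) by nra.
  nra.
Qed.

Lemma slopes_zero n c e : (0 < n)%nat ->
  (forall j, (j < n + 3)%nat -> exists t, wedge_lo j <= t <= wedge_hi j /\ 0 <= wedge_val n j c e t) ->
  c = 0 /\ e = 0.
Proof.
  intros Hn Hadm.
  destruct (Hadm 0%nat ltac:(lia)) as (t0 & Ht0 & H0).
  destruct (Hadm 1%nat ltac:(lia)) as (t1 & Ht1 & H1).
  destruct (Hadm 2%nat ltac:(lia)) as (t2 & Ht2 & H2).
  unfold wedge_val in H0, H1, H2; cbn [wedge_lo wedge_hi wedge_ny wedge_nz] in *.
  assert (t1 = 1/2) by lra; assert (t2 = 1/2) by lra; subst t1 t2.
  assert (Hc : 0 <= c) by lra.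
  assert (He : 2 * c <= e) by lra.
  pose proof (pow2_ge1 n).
  assert (Hup : e <= 2 ^ n * c).
  { destruct (Rle_dec e (2 ^ n * c)) as [h | h]; [exact h |].
    apply Rnot_le_lt in h; exfalso.
    assert (0 < (e - 2 ^ n * c) * (1 - t0)) by (apply Rmult_lt_0_compat; lra).
    assert (0 <= 2 ^ n * c * (1 - 2 * t0)) by (apply Rmult_le_pos; nra).
    nra. }
  destruct (Rle_lt_or_eq_dec 0 c Hc) as [Hcpos | <-]; [exfalso | split; lra].
  destruct n as [|N]; [lia |].
  destruct (dyadic_window N c e Hcpos (conj He Hup)) as (k & Hk & Hwin).
  destruct (Hadm (3 + k)%nat ltac:(lia)) as (t & Ht & Hval).
  simpl in Ht; pose proof (window_excluded (S N) k c e t Hwin Ht); lra.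
Qed.

Lemma end_admissible_scale n j c e l : 0 < l ->
  end_admissible n j c e -> end_admissible n j (l * c) (l * e).
Proof.
  intros Hl; unfold end_admissible.
  assert (Hs : forall t, wedge_val n j (l * c) (l * e) t = l * wedge_val n j c e t)
    by (intros; unfold wedge_val; ring).
  rewrite !Hs; intros [H | H]; [left | right]; apply Rmult_le_pos; lra.
Qed.

Ltac end_admissible_by_cases :=
  unfold end_admissible, wedge_val; cbn [wedge_lo wedge_hi wedge_ny wedge_nz pow] in *;
  first [left; nra | right; nra].

Lemma escaping_slopes n j0 : (j0 < n + 3)%nat -> exists c e, (c <> 0 \/ e <> 0) /\
  forall j, (j < n + 3)%nat -> j <> j0 -> end_admissible n j c e.
Proof.
  intros Hj0; pose proof (pow2_ge1 n).
  destruct j0 as [|[|[|k0]]].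
  - exists 0, 1; split; [right; lra |].
    intros [|[|[|k]]] Hj Hne; [lia | | | pose proof (pow2_ge1 k)]; end_admissible_by_cases.
  - exists (-1), (-1); split; [left; lra |].
    intros [|[|[|k]]] Hj Hne; [| lia | | pose proof (pow2_ge1 k)]; end_admissible_by_cases.
  - exists 1, 0; split; [left; lra |].
    intros [|[|[|k]]] Hj Hne; [| | lia | pose proof (pow2_ge1 k)]; end_admissible_by_cases.
  - exists 1, (2 ^ S k0); split; [left; lra |].
    assert (2 ^ S k0 <= 2 ^ n) by (apply Rle_pow; [lra | lia]).
    pose proof (pow2_ge1 k0).
    intros [|[|[|k]]] Hj Hne; try end_admissible_by_cases.
    destruct (Nat.lt_trichotomy k k0) as [Hlt | [-> | Hgt]]; [| lia |].
    + assert (2 ^ S (S k) <= 2 ^ S k0) by (apply Rle_pow; [lra | lia]).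
      end_admissible_by_cases.
    + assert (2 ^ S (S k0) <= 2 ^ S k) by (apply Rle_pow; [lra | lia]).
      end_admissible_by_cases.
Qed.

Lemma small_escaping_slopes n j0 delta : 0 < delta -> (j0 < n + 3)%nat ->
  exists c e, (c <> 0 \/ e <> 0) /\ -delta <= c <= delta /\ -delta <= e <= delta /\
  forall j, (j < n + 3)%nat -> j <> j0 -> end_admissible n j c e.
Proof.
  intros Hdelta Hj0.
  destruct (escaping_slopes n j0 Hj0) as (c & e & Hce & Hadm).
  set (M := 1 + c * c + e * e).
  assert (HM : 0 < M) by (unfold M; nra).
  set (l := delta / M).
  assert (Hl : 0 < l) by (apply Rdiv_lt_0_compat; assumption).
  assert (HlM : l * M = delta) by (unfold l; field; lra).
  assert (-M <= c <= M /\ -M <= e <= M) by (unfold M; split; split; nra).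
  clearbody l M.
  exists (l * c), (l * e); split; [| split; [| split]].
  - destruct Hce; [left | right]; apply Rmult_integral_contrapositive; split; lra.
  - split; nra.
  - split; nra.
  - intros j Hj Hne; apply end_admissible_scale, Hadm; assumption.
Qed.

Lemma same_line_sym p d p' d' : same_line p d p' d' -> same_line p' d' p d.
Proof. intros H x; symmetry; apply H. Qed.

Definition meets (p d : point) (vs : list point) : Prop :=
  exists x, line_pts p d x /\ conv_hull vs x.

Lemma meets_same_line p d p' d' vs : same_line p d p' d' -> meets p d vs -> meets p' d' vs.
Proof. intros Hs (x & Hx & Hvs); exists x; split; [apply Hs |]; assumption. Qed.

Lemma line_through_segments p1 p2 p3 d1 d2 d3 : d1 <> 0 ->
  meets (p1, p2, p3) (d1, d2, d3) seg0 -> meets (p1, p2, p3) (d1, d2, d3) seg1 ->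
  same_line (p1, p2, p3) (d1, d2, d3) (0, 0, - (d3 / d1)) (1, d2 / d1, d3 / d1).
Proof.
  intros Hd1 ([[x1 x2] x3] & [s Hs] & H0) ([[y1 y2] y3] & [r Hr] & H1).
  apply seg0_inv in H0 as [-> ->]; apply seg1_inv in H1 as [-> ->].
  set (c := d2 / d1); set (e := d3 / d1).
  assert (Hd2 : d2 = c * d1) by (unfold c; field; exact Hd1).
  assert (Hd3 : d3 = e * d1) by (unfold e; field; exact Hd1).
  clearbody c e; subst d2 d3.
  simpl in Hs, Hr; injection Hs as Hs1 Hs2 _; injection Hr as Hr1 _ Hr3.
  assert (Hp2 : p2 = c * p1) by nra.
  assert (Hp3 : p3 = e * (p1 - 1)) by nra.
  intros x; split; intros [t ->].
  - exists (p1 + t * d1); simpl; apply pair3_eq; subst; ring.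
  - exists ((t - p1) / d1); simpl; apply pair3_eq; subst; field; exact Hd1.
Qed.

Lemma tilted_meets_wedge_inv n j c e : meets (0, 0, - e) (1, c, e) (wedge_of n j) ->
  exists t, wedge_lo j <= t <= wedge_hi j /\ 0 <= wedge_val n j c e t.
Proof.
  intros ([[x1 x2] x3] & [t Ht] & Hx); simpl in Ht; injection Ht as -> -> ->.
  destruct (wedge_params n j) as (Hlo & Hhi & _).
  apply wedge_inv in Hx as [Ht Hval]; [| lra].
  exists (0 + t * 1); split; [exact Ht |].
  unfold wedge_val; replace (e * (0 + t * 1 - 1)) with (- e + t * e) by ring.
  replace (c * (0 + t * 1)) with (0 + t * c) by ring; exact Hval.
Qed.

Lemma tilted_meets_wedge n j c e : -1/16 <= c <= 1/16 -> -1/16 <= e <= 1/16 ->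
  end_admissible n j c e -> meets (0, 0, - e) (1, c, e) (wedge_of n j).
Proof.
  intros Hc He Hend.
  destruct (wedge_params n j) as (Hlo & Hhi & HN & Hny & Hnz).
  assert (Hmeet : forall t, t = wedge_lo j \/ t = wedge_hi j -> 0 <= wedge_val n j c e t ->
            meets (0, 0, - e) (1, c, e) (wedge_of n j)).
  { intros t Ht Hval; exists (t, c * t, e * (t - 1)); split.
    - exists t; simpl; apply pair3_eq; ring.
    - assert (-1 <= t <= 2) by lra.
      apply wedge_mem; try assumption; nra. }
  destruct Hend as [H | H]; [apply (Hmeet (wedge_lo j)) | apply (Hmeet (wedge_hi j))]; auto.
Qed.

Lemma meets_wedge_of_apex n j p d : line_pts p d (1/2, 0, 0) -> meets p d (wedge_of n j).
Proof. intros H; exists (1/2, 0, 0); split; [exact H | apply wedge_apex]. Qed.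

Lemma off_axis_not_same_line p d x1 x2 x3 : line_pts p d (x1, x2, x3) -> (x2 <> 0 \/ x3 <> 0) ->
  ~ same_line (0, 0, 0) (1, 0, 0) p d.
Proof.
  intros Hx Hoff Hs; apply Hs in Hx as [t Ht]; simpl in Ht; injection Ht as _ H2 H3.
  destruct Hoff; lra.
Qed.

Definition vertices (n i : nat) : list point :=
  match i with 0%nat => seg0 | 1%nat => seg1 | S (S j) => wedge_of n j end.

Definition polytopes (n i : nat) : point -> Prop := conv_hull (vertices n i).

Lemma polytopes_convex n i : convex_polytope (polytopes n i).
Proof.
  exists (vertices n i); split; [destruct i as [|[|i]]; discriminate | reflexivity].
Qed.

Lemma is_line_unit_x p y z : is_line p (1, y, z).
Proof. intros H; injection H; lra. Qed.

Lemma axis_pinned n : (0 < n)%nat ->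
  pins (fun i => (i < n + 5)%nat) (polytopes n) (0, 0, 0) (1, 0, 0).
Proof.
  intros Hn; split.
  - intros [|[|j]] _.
    + exists (0, 0, 0); split; [exists 0; simpl; apply pair3_eq; ring |].
      apply seg0_mem; lra.
    + exists (1, 0, 0); split; [exists 1; simpl; apply pair3_eq; ring |].
      apply seg1_mem; lra.
    + apply meets_wedge_of_apex; exists (1/2); simpl; apply pair3_eq; ring.
  - exists (1/2); split; [lra |].
    intros [[p1 p2] p3] [[d1 d2] d3] _ _ [Hd1 _] Htr.
    apply Rabs_def2 in Hd1.
    assert (Hs : same_line (p1, p2, p3) (d1, d2, d3) (0, 0, - (d3 / d1)) (1, d2 / d1, d3 / d1))
      by (apply line_through_segments; [lra | apply (Htr 0%nat) | apply (Htr 1%nat)]; lia).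
    destruct (slopes_zero n (d2 / d1) (d3 / d1) Hn) as [Hc He].
    { intros j Hj; apply tilted_meets_wedge_inv, (meets_same_line _ _ _ _ _ Hs).
      apply (Htr (S (S j))); lia. }
    rewrite Hc, He, Ropp_0 in Hs; apply same_line_sym, Hs.
Qed.

Definition escapes (n i0 : nat) (delta : R) (p d : point) : Prop :=
  is_line p d /\ pclose delta (0, 0, 0) p /\ pclose delta (1, 0, 0) d /\
  (forall i, (i < n + 5)%nat -> i <> i0 -> meets p d (vertices n i)) /\
  ~ same_line (0, 0, 0) (1, 0, 0) p d.

Lemma pclose_of_bounds eps a1 a2 a3 b1 b2 b3 :
  -eps < a1 - b1 < eps -> -eps < a2 - b2 < eps -> -eps < a3 - b3 < eps ->
  pclose eps (a1, a2, a3) (b1, b2, b3).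
Proof. intros H1 H2 H3; repeat split; apply Rabs_def1; lra. Qed.

(* Lines through the common apex [(1/2, 0, 0)] of all the wedges. *)
Lemma pivot_escapes n i0 y z delta : (y <> 0 \/ z <> 0) ->
  -delta < 2 * y < delta -> -delta < 2 * z < delta ->
  (forall i, (i <= 1)%nat -> i <> i0 -> meets (0, - y, - z) (1, 2 * y, 2 * z) (vertices n i)) ->
  escapes n i0 delta (0, - y, - z) (1, 2 * y, 2 * z).
Proof.
  intros Hyz Hy Hz Hseg; split; [apply is_line_unit_x |].
  split; [apply pclose_of_bounds; lra |]; split; [apply pclose_of_bounds; lra |]; split.
  - intros [|[|j]] Hi Hne; [apply Hseg; lia .. |].
    apply meets_wedge_of_apex; exists (1/2); simpl; apply pair3_eq; field.
  - apply (off_axis_not_same_line _ _ 0 (- y) (- z)); [exists 0; simpl; apply pair3_eq; ring | lra].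
Qed.

Lemma tilted_escapes n j0 c e delta : (c <> 0 \/ e <> 0) ->
  -delta < c < delta -> -delta < e < delta -> -1/16 <= c <= 1/16 -> -1/16 <= e <= 1/16 ->
  (forall j, (j < n + 3)%nat -> j <> j0 -> end_admissible n j c e) ->
  escapes n (S (S j0)) delta (0, 0, - e) (1, c, e).
Proof.
  intros Hce Hc He Hc' He' Hadm; split; [apply is_line_unit_x |].
  split; [apply pclose_of_bounds; lra |]; split; [apply pclose_of_bounds; lra |]; split.
  - intros [|[|j]] Hi Hne.
    + exists (0, 0, - e); split; [exists 0; simpl; apply pair3_eq; ring | apply seg0_mem; lra].
    + exists (1, c, 0); split; [exists 1; simpl; apply pair3_eq; ring | apply seg1_mem; lra].
    + apply tilted_meets_wedge, Hadm; [assumption .. | lia | congruence].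
  - destruct Hce as [Hc0 | He0].
    + apply (off_axis_not_same_line _ _ 1 c 0); [exists 1; simpl; apply pair3_eq; ring | lra].
    + apply (off_axis_not_same_line _ _ 0 0 (- e)); [exists 0; simpl; apply pair3_eq; ring | lra].
Qed.

Lemma escape_exists n i0 delta : 0 < delta -> (i0 < n + 5)%nat ->
  exists p d, escapes n i0 delta p d.
Proof.
  intros Hdelta Hi0.
  set (eta := Rmin (delta / 4) (1/16)).
  assert (Heta : 0 < eta <= 1/16 /\ eta <= delta / 4)
    by (unfold eta; apply Rmin_case_strong; intros; lra).
  destruct i0 as [|[|j0]].
  - exists (0, - eta, - 0), (1, 2 * eta, 2 * 0); apply pivot_escapes; try lra.
    intros [|[|i]] Hi Hne; [lia | | lia].
    exists (1, eta, 0); split; [exists 1; simpl; apply pair3_eq; ring | apply seg1_mem; lra].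
  - exists (0, - 0, - eta), (1, 2 * 0, 2 * eta); apply pivot_escapes; try lra.
    intros [|[|i]] Hi Hne; [| lia | lia].
    exists (0, 0, - eta); split; [exists 0; simpl; apply pair3_eq; ring | apply seg0_mem; lra].
  - destruct (small_escaping_slopes n j0 eta) as (c & e & Hce & Hc & He & Hadm); [lra | lia |].
    exists (0, 0, - e), (1, c, e); apply tilted_escapes; assumption || lra.
Qed.

Lemma proper_subfamily_not_pins n (S : nat -> Prop) :
  (forall i, S i -> (i < n + 5)%nat) -> (exists i, (i < n + 5)%nat /\ ~ S i) ->
  ~ pins S (polytopes n) (0, 0, 0) (1, 0, 0).
Proof.
  intros HS (i0 & Hi0 & Hout) (_ & eps & Heps & Hiso).
  destruct (escape_exists n i0 eps Heps Hi0) as (p & d & Hline & Hp & Hd & Hmeet & Hne).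
  apply Hne, Hiso; try assumption.
  intros i Hi; apply Hmeet; [apply HS, Hi | intros ->; contradiction].
Qed.

Theorem theorem3 :
  forall n : nat, (0 < n)%nat ->
  exists (p d : point) (m : nat) (P : nat -> point -> Prop),
    is_line p d /\
    (n <= m)%nat /\
    (forall i, (i < m)%nat -> convex_polytope (P i)) /\
    minimal_pinning m P p d.
Proof.
  intros n Hn.
  exists (0, 0, 0), (1, 0, 0), (n + 5)%nat, (polytopes n).
  split; [apply is_line_unit_x |].
  split; [lia |].
  split; [intros i _; apply polytopes_convex |].
  split; [apply axis_pinned, Hn | apply proper_subfamily_not_pins].
Qed.
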